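(* Let $p$ be a prime, $n>1$, $\alpha_0,\dots,\alpha_{n-1}\in\mathbb{L}_p$, and let $A\in\mathbb{L}_p^{n\times n}$ be the matrix whose transpose $A^T$ is the companion matrix of $-\alpha_0-\alpha_1t-\dots-\alpha_{n-1}t^{n-1}+t^n$. Then the linear cellular automaton over $(\mathbb{Z}/p\mathbb{Z})^n$ with associated matrix $A$ is positively expansive if and only if the linear cellular automaton over $(\mathbb{Z}/p\mathbb{Z})^n$ with associated matrix $A^T$ is positively expansive.
   Context: $\mathbb{L}_p=\mathbb{Z}/p\mathbb{Z}[X,X^{-1}]$. The companion matrix of a monic polynomial $\beta_0+\dots+\beta_{n-1}t^{n-1}+t^n$ is the $n\times n$ matrix with ones on the subdiagonal, last column $(-\beta_0,\dots,-\beta_{n-1})^T$, and zeros elsewhere. The linear cellular automaton over $(\mathbb{Z}/p\mathbb{Z})^n$ with associated matrix $\sum_{j=-r}^rA_jX^{-j}$ ($A_j\in(\mathbb{Z}/p\mathbb{Z})^{n\times n}$) is the map $\mathcal{F}(c)_i=\sum_{j=-r}^rA_jc_{i+j}$ on $((\mathbb{Z}/p\mathbb{Z})^n)^{\mathbb{Z}}$ with metric $d(c,c')=2^{-\min\{|j|:c_j\neq c'_j\}}$ ($d(c,c)=0$); it is positively expansive if there is $\varepsilon>0$ such that for all $c\neq c'$ some $\ell\in\mathbb{N}$ gives $d(\mathcal{F}^\ell(c),\mathcal{F}^\ell(c'))\geq\varepsilon$. *)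

From Stdlib Require Import Reals ClassicalEpsilon.
From mathcomp Require Import all_boot all_algebra.
Set Implicit Arguments. Unset Strict Implicit. Unset Printing Implicit Defensive.
Import GRing.Theory.

(* Laurent polynomials over Z/pZ:  Laurent k q  represents  X^{-k} * q(X). *)
Record laurent (p : nat) := Laurent { lshift : nat; lpoly : {poly 'F_p} }.

Section Laurent.
Variable p : nat.
Local Open Scope ring_scope.

Definition lcoef (a : laurent p) (m : int) : 'F_p :=
  match (m + (lshift a)%:Z)%R with
  | Posz k => (lpoly a)`_k
  | Negz _ => 0
  end.

Definition lzero : laurent p := Laurent 0 0.
Definition lone : laurent p := Laurent 0 1.
Definition lneg (a : laurent p) : laurent p := Laurent (lshift a) (- lpoly a).

(* all nonzero coefficients of a sit at exponents m with |m| <= lradius a *)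
Definition lradius (a : laurent p) : nat := maxn (lshift a) (size (lpoly a)).

(* companion matrix of  beta_0 + ... + beta_{n-1} t^{n-1} + t^n :
   ones on the subdiagonal, last column (-beta_0,...,-beta_{n-1})^T *)
Definition companion (n : nat) (beta : 'I_n -> laurent p) : 'M[laurent p]_n :=
  \matrix_(i, j) if j.+1 == n then lneg (beta i)
                 else if i == j.+1 :> nat then lone else lzero.

Definition config (n : nat) := int -> 'cV['F_p]_n.

(* A = sum_j A_j X^{-j} : A_j is the matrix of coefficients of X^{-j} *)
Definition coefmx (n : nat) (A : 'M[laurent p]_n) (m : int) : 'M['F_p]_n :=
  \matrix_(k, l) lcoef (A k l) m.

Definition mxradius (n : nat) (A : 'M[laurent p]_n) : nat :=
  \max_(k < n) \max_(l < n) lradius (A k l).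

(* F(c)_i = sum_{j=-r}^{r} A_j c_{i+j} *)
Definition lca (n : nat) (A : 'M[laurent p]_n) (c : config n) : config n :=
  fun i => let r := mxradius A in
    \sum_(t < (r + r).+1)
      coefmx A (- ((t : nat)%:Z - r%:Z)) *m c (i + ((t : nat)%:Z - r%:Z)).

Definition mindiff (n : nat) (c c' : config n) : nat :=
  epsilon (inhabits 0%N)
    (fun k => (exists j : int, absz j = k /\ c j <> c' j) /\
              (forall j : int, c j <> c' j -> (k <= absz j)%N)).

Definition cdist (n : nat) (c c' : config n) : R :=
  if excluded_middle_informative (c = c') then R0
  else pow (Rinv 2) (mindiff c c').

Definition pos_expansive (n : nat) (F : config n -> config n) : Prop :=
  exists eps : R, Rlt R0 eps /\
    forall c c' : config n, c <> c' ->
      exists l : nat, Rle eps (cdist (iter l F c) (iter l F c')).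
End Laurent.

(* With C the companion matrix, A = C^T and A^T = C are conjugate over L_p: the
   Hankel matrix H with H_(k,l) = -alpha_(k+l+1) for k + l < n - 1, ones on the
   antidiagonal and zeros below it satisfies H A = A^T H, and back substitution
   along the antidiagonal inverts it over L_p.  Both v |-> H v and its inverse are
   sliding block codes, and a sliding block code of radius s moves every
   difference between two configurations by at most s sites, so it distorts the
   metric by at most a factor 2^s; positive expansiveness therefore passes along H
   in both directions. *)

From Stdlib Require Import Reals ClassicalEpsilon Classical FunctionalExtensionality Lra Wf_nat.
From mathcomp Require Import all_boot all_algebra zify ring.
Set Implicit Arguments. Unset Strict Implicit. Unset Printing Implicit Defensive.
Import GRing.Theory.

Definition agree (T : Type) (N : nat) (x y : int -> T) :=
  forall j : int, (absz j <= N)%N -> x j = y j.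

Lemma agree_le (T : Type) (N1 N2 : nat) (x y : int -> T) :
  (N1 <= N2)%N -> agree N2 x y -> agree N1 x y.
Proof. by move=> le_N agr j le_j; apply: agr; apply: leq_trans le_N. Qed.

Lemma disagree_near (T U : Type) (s : nat) (x y : int -> T) (u v : int -> U) :
  (forall N, agree (N + s) x y -> agree N u v) ->
  forall j, u j <> v j -> exists j', (absz j' <= absz j + s)%N /\ x j' <> y j'.
Proof.
move=> loc j ne; apply: NNPP => none; apply/ne/(loc (absz j)) => // j' hj'.
by apply: NNPP => ne'; apply: none; exists j'.
Qed.

Lemma pow_half_le (a b : nat) : (a <= b)%N -> Rle (pow (/2) b) (pow (/2) a).
Proof.
move=> /leP ab; rewrite !pow_inv; apply: Rinv_le_contravar.
  by apply: pow_lt; lra.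
by apply: Rle_pow => //; lra.
Qed.

Section Expansive.
Variables p n : nat.
Implicit Types (c d : config p n) (F G K : config p n -> config p n).

Lemma mindiff_spec c c' : c <> c' ->
  (exists j, absz j = mindiff c c' /\ c j <> c' j) /\
  forall j, c j <> c' j -> (mindiff c c' <= absz j)%N.
Proof.
move=> ne; apply: (epsilon_spec (inhabits 0%N) (fun k =>
  (exists j, absz j = k /\ c j <> c' j) /\ forall j, c j <> c' j -> (k <= absz j)%N)).
have [j ne_j] : exists j, c j <> c' j.
  by apply: not_all_ex_not => eq_cc'; apply/ne/functional_extensionality.
have [k [[[j' [<- ne_j']] min_k] _]] :=
  @dec_inh_nat_subset_has_unique_least_element
    (fun k => exists j, absz j = k /\ c j <> c' j) (fun k => classic _)
    (ex_intro _ _ (ex_intro _ j (conj erefl ne_j))).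
by exists (absz j'); split; [exists j' | move=> j0 ne0; apply/leP/min_k; exists j0].
Qed.

Lemma cdist_ge c c' j : c j <> c' j -> Rle (pow (/2) (absz j)) (cdist c c').
Proof.
move=> ne_j; have ne : c <> c' by move=> eq_cc'; apply: ne_j; rewrite eq_cc'.
rewrite /cdist; destruct excluded_middle_informative => //.
exact/pow_half_le/(proj2 (mindiff_spec ne)).
Qed.

Lemma cdist_witness c c' eps : Rlt 0 eps -> Rle eps (cdist c c') ->
  exists j, c j <> c' j /\ Rle eps (pow (/2) (absz j)).
Proof.
rewrite /cdist; destruct excluded_middle_informative as [eq_cc|ne] => /= eps_gt0 le_eps.
  by change R0 with (IZR 0) in le_eps; lra.
by have [[j [e ne_j]] _] := mindiff_spec ne; exists j; rewrite e.
Qed.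

Lemma cdist_transfer s c c' d d' eps : Rlt 0 eps -> Rle eps (cdist c c') ->
  (forall j, c j <> c' j -> exists j', (absz j' <= absz j + s)%N /\ d j' <> d' j') ->
  Rle (Rmult eps (pow (/2) s)) (cdist d d').
Proof.
move=> eps_gt0 le_eps near.
have [j [ne_j le_j]] := cdist_witness eps_gt0 le_eps.
have [j' [le_j' ne_j']] := near j ne_j.
apply: Rle_trans (cdist_ge ne_j'); apply: Rle_trans (pow_half_le le_j').
rewrite pow_add; apply: Rmult_le_compat_r => //; apply: pow_le; lra.
Qed.

Definition local K := exists s, forall x y N, agree (N + s) x y -> agree N (K x) (K y).

Definition colocal K := exists s, forall x y N, agree (N + s) (K x) (K y) -> agree N x y.

Lemma colocal_inj K : colocal K -> injective K.
Proof.
move=> [s coloc] x y eq_xy; apply: functional_extensionality => j.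
by apply: (coloc _ _ (absz j)) => // j' _; rewrite eq_xy.
Qed.

Section Conjugacy.
Variables F G K : config p n -> config p n.
Hypothesis KG : forall x, K (G x) = F (K x).

Lemma iter_conj l x : iter l F (K x) = K (iter l G x).
Proof. by elim: l => //= l ->; rewrite KG. Qed.

Lemma expansive_embedding : injective K -> local K -> pos_expansive F -> pos_expansive G.
Proof.
move=> K_inj [s loc] [eps [eps_gt0 expF]].
exists (Rmult eps (pow (/2) s)); split; first by apply: Rmult_lt_0_compat => //; apply: pow_lt; lra.
move=> x x' ne; have [l le_eps] : exists l, Rle eps (cdist (iter l F (K x)) (iter l F (K x'))).
  by apply: expF => /K_inj.
exists l; rewrite !iter_conj in le_eps; apply: cdist_transfer eps_gt0 le_eps _.
exact: disagree_near (loc _ _).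
Qed.

Lemma expansive_factor : (forall w, exists v, K v = w) -> colocal K ->
  pos_expansive G -> pos_expansive F.
Proof.
move=> K_surj [s coloc] [eps [eps_gt0 expG]].
exists (Rmult eps (pow (/2) s)); split; first by apply: Rmult_lt_0_compat => //; apply: pow_lt; lra.
move=> w w'; have [[v <-] [v' <-]] := (K_surj w, K_surj w') => ne.
have [l le_eps] := expG v v' (fun e => ne (congr1 K e)).
exists l; rewrite !iter_conj; apply: cdist_transfer eps_gt0 le_eps _.
exact: disagree_near (coloc _ _).
Qed.

End Conjugacy.
End Expansive.

Local Open Scope ring_scope.

Lemma sum_if_eq (V : nmodType) (n m : nat) (f : nat -> V) :
  \sum_(j < n) (if j == m :> nat then f j else 0) = if (m < n)%N then f m else 0.
Proof.
rewrite -big_mkcond; case: ltnP => [lt_mn|le_nm].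
  by rewrite (big_pred1 (Ordinal lt_mn)) // => j; rewrite -val_eqE.
by rewrite big_pred0 // => j; apply/negbTE; rewrite neq_ltn (leq_trans (ltn_ord j)).
Qed.

Section LaurentAction.
Variable p : nat.

Definition act (r : nat) (a : laurent p) (s : int -> 'F_p) (i : int) : 'F_p :=
  \sum_(t < (r + r).+1) lcoef a (- ((t : nat)%:Z - r%:Z)) * s (i + ((t : nat)%:Z - r%:Z)).

Lemma lca_component n (M : 'M[laurent p]_n) (c : config p n) i k :
  lca M c i k 0 = \sum_(m < n) act (mxradius M) (M k m) (fun i => c i m 0) i.
Proof.
rewrite /lca summxE /act; under eq_bigr do rewrite mxE.
by rewrite exchange_big; apply: eq_bigr => m _; apply: eq_bigr => t _; rewrite mxE.
Qed.

Lemma lnegK : involutive (@lneg p).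
Proof. by case=> s q; rewrite /lneg /= opprK. Qed.

Lemma lcoef_lone m : lcoef (lone p) m = (m == 0)%:R.
Proof. by rewrite /lcoef /= addr0; case: m => [k|k] //=; rewrite coefC; case: k. Qed.

Lemma lcoef_lzero m : lcoef (lzero p) m = 0.
Proof. by rewrite /lcoef /=; case: (m + 0) => k //; rewrite coef0. Qed.

Lemma act_indicator r (b : bool) s i :
  act r (if b then lone p else lzero p) s i = if b then s i else 0.
Proof.
rewrite /act; case: b; last by rewrite big1 // => t _; rewrite lcoef_lzero mul0r.
have r_lt : (r < (r + r).+1)%N by lia.
rewrite (bigD1 (Ordinal r_lt)) //= subrr oppr0 addr0 lcoef_lone eqxx mul1r.
rewrite big1 ?addr0 // => t ne_tr; rewrite lcoef_lone; case: eqP => [e|_]; last by rewrite mul0r.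
by case/eqP: ne_tr; apply: val_inj => /=; lia.
Qed.

Lemma act_local r a s s' (N : nat) i :
  agree (N + r) s s' -> (absz i <= N)%N -> act r a s i = act r a s' i.
Proof. by move=> agr le_iN; apply: eq_bigr => t _; rewrite agr //; have := ltn_ord t; lia. Qed.

End LaurentAction.

Lemma mxradius_tr p n (M : 'M[laurent p]_n) : mxradius M^T = mxradius M.
Proof.
by rewrite /mxradius exchange_big; apply: eq_bigr => k _; apply: eq_bigr => l _; rewrite mxE.
Qed.

Section Companion.
Variables (p n' : nat) (alpha : 'I_n'.+1 -> laurent p).
Local Notation n := n'.+1.
Let A : 'M[laurent p]_n := (companion (fun i => lneg (alpha i)))^T.
Let r := mxradius A.

(* Reading the ordinal through [inord], [coord v m] is junk for [m >= n]. *)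
Definition coord (v : config p n) (m : nat) : int -> 'F_p := fun i => v i (inord m) 0.

Lemma coord_ord (v : config p n) (m : 'I_n) : (fun i => v i m 0) = coord v m.
Proof. by apply: functional_extensionality => i; rewrite /coord inord_val. Qed.

Lemma lca_trcompanion_component v (m : 'I_n) i : lca A v i m 0 =
  if m == n' :> nat then \sum_(j < n) act r (alpha j) (coord v j) i else coord v m.+1 i.
Proof.
rewrite lca_component; under eq_bigr => j _ do rewrite coord_ord !mxE lnegK.
rewrite eqSS; case: ifP => // ne_mn.
under eq_bigr => j _ do rewrite (act_indicator _ (j == m.+1 :> nat)).
by rewrite (sum_if_eq _ _ (fun j => coord v j i)) ifT //; have := ltn_ord m; lia.
Qed.

Lemma coord_lca_trcompanion_shift v m : (m.+1 < n)%N -> coord (lca A v) m = coord v m.+1.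
Proof.
move=> lt_m; apply: functional_extensionality => i.
by rewrite /coord lca_trcompanion_component inordK ?ifN //; lia.
Qed.

Lemma coord_lca_trcompanion_last v i :
  coord (lca A v) n' i = \sum_(j < n) act r (alpha j) (coord v j) i.
Proof. by rewrite /coord lca_trcompanion_component inordK ?eqxx. Qed.

Lemma lca_trcompanion_component_TMP w (k : 'I_n) i : lca A^T w i k 0 =
  act r (alpha k) (coord w n') i + (if (0 < k)%N then coord w k.-1 i else 0).
Proof.
rewrite lca_component mxradius_tr.
have split_entry j : act r (A^T k j) (coord w j) i =
    (if j == n' :> nat then act r (alpha k) (coord w j) i else 0) +
    (if j == k.-1 :> nat then if (0 < k)%N then coord w j i else 0 else 0).
  rewrite trmxK !mxE lnegK eqSS; case: eqP => [->|_]; last first.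
    rewrite add0r (act_indicator _ (k == j.+1 :> nat)).
    by case: k => [[|k] ?] /=; [case: eqP | rewrite eqSS eq_sym].
  by case: k => [[|k] lt_k] /=; rewrite ?if_same ?addr0 // ifN ?addr0 //; lia.
under eq_bigr => j _ do rewrite coord_ord split_entry.
rewrite big_split /= (sum_if_eq _ _ (fun j => act r (alpha k) (coord w j) i)).
rewrite (sum_if_eq _ _ (fun j => if (0 < k)%N then coord w j i else 0)).
by rewrite ltnSn (leq_ltn_trans (leq_pred k) (ltn_ord k)).
Qed.

Definition hankel (v : config p n) : config p n := fun i =>
  \col_(k < n) (coord v (n' - k) i -
    \sum_(j < n | (k < j)%N) act r (alpha j) (coord v (j - k.+1)) i).

Lemma coord_hankel v m i : (m < n)%N -> coord (hankel v) m i =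
  coord v (n' - m) i - \sum_(j < n | (m < j)%N) act r (alpha j) (coord v (j - m.+1)) i.
Proof. by move=> lt_m; rewrite /coord {1}/hankel mxE inordK. Qed.

Lemma hankel_conj v : hankel (lca A v) = lca A^T (hankel v).
Proof.
apply: functional_extensionality => i; apply/matrixP => k z; rewrite ord1.
rewrite lca_trcompanion_component_TMP {1}/hankel mxE.
have -> : coord (hankel v) n' = coord v 0.
  apply: functional_extensionality => x.
  by rewrite coord_hankel // subnn big_pred0 ?subr0 // => j; rewrite ltnNge -ltnS ltn_ord.
have -> : \sum_(j < n | (k < j)%N) act r (alpha j) (coord (lca A v) (j - k.+1)) i =
          \sum_(j < n | (k < j)%N) act r (alpha j) (coord v (j - k)) i.
  apply: eq_bigr => j lt_kj; rewrite coord_lca_trcompanion_shift ?subnSK //.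
  by have := ltn_ord j; lia.
case: k => [[|k] lt_k] /=.
  rewrite subn0 coord_lca_trcompanion_last (bigD1 ord0) //= addr0.
  rewrite [X in _ - X](eq_big (fun j : 'I_n => j != ord0)
                               (fun j => act r (alpha j) (coord v j) i)) => [|j|j _].
  - by rewrite addrK; congr (act r (alpha _)); apply: val_inj.
  - by rewrite -val_eqE lt0n.
  - by rewrite subn0.
rewrite coord_lca_trcompanion_shift; last lia.
rewrite coord_hankel; last lia.
rewrite [X in _ + (_ - X)](bigD1 (Ordinal lt_k)) //= subnn.
rewrite [X in _ = _ + (_ - (_ + X))](eq_bigl (fun j : 'I_n => (k.+1 < j)%N)); last first.
  by move=> j; rewrite -val_eqE /=; lia.
have -> : ((n' - k.+1).+1 = n' - k)%N by lia.
ring.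
Qed.

Lemma coord_from_hankel v m i : (m < n)%N -> coord v m i =
  coord (hankel v) (n' - m) i +
  \sum_(j < n | (n' - m < j)%N) act r (alpha j) (coord v (j + m - n)) i.
Proof.
move=> lt_m; rewrite coord_hankel ?subKn; try lia.
rewrite (eq_bigr (fun j : 'I_n => act r (alpha j) (coord v (j + m - n)) i)) ?subrK //.
by move=> j _; congr act; congr coord; lia.
Qed.

Lemma hankel_local : local hankel.
Proof.
exists r => x y N agr j le_j; apply/matrixP => k z; rewrite ord1 !mxE.
have agr_coord m : agree (N + r) (coord x m) (coord y m) by move=> i le_i; rewrite /coord agr.
rewrite agr_coord; last lia.
by congr (_ - _); apply: eq_bigr => l _; apply: act_local (agr_coord _) le_j.
Qed.

Lemma hankel_colocal : colocal hankel.
Proof.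
exists (n * r)%N => x y N agr.
have agr_coord m : (m < n)%N -> agree (N + (n - m) * r)%N (coord x m) (coord y m).
  elim/ltn_ind: m => m IH lt_m i le_i; rewrite !(coord_from_hankel _ _ lt_m).
  congr (_ + _).
    rewrite /coord agr //; apply: leq_trans le_i _.
    by rewrite leq_add2l leq_mul2r leq_subr orbT.
  apply: eq_bigr => j lt_j; have lt_jn := ltn_ord j.
  apply: act_local le_i; apply: agree_le (IH _ _ _); try lia.
  have : ((n - m).+1 * r <= (n - (j + m - n)) * r)%N by apply: leq_mul => //; lia.
  by rewrite mulSn; lia.
move=> j le_j; apply/matrixP => k z; rewrite ord1.
have := agr_coord k (ltn_ord k) j (leq_trans le_j (leq_addr _ _)).
by rewrite /coord inord_val.
Qed.

(* Fuel M: coordinates m < M are final; coordinate m is obtained from the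
   coordinates j + m - n < m by the recursion [coord_from_hankel]. *)
Fixpoint preimage_coord (c : config p n) (M : nat) : nat -> int -> 'F_p :=
  if M is M'.+1 then fun m =>
    if (m < M')%N then preimage_coord c M' m
    else fun i => c i (inord (n' - m)) 0 +
      \sum_(j < n | (n' - m < j)%N) act r (alpha j) (preimage_coord c M' (j + m - n)) i
  else fun _ _ => 0.

Lemma preimage_coord_stable c M m : (m < M)%N -> preimage_coord c M m = preimage_coord c m.+1 m.
Proof.
elim: M => // M IH; rewrite ltnS leq_eqVlt => /orP [/eqP -> | lt_mM] //=.
by rewrite lt_mM IH.
Qed.

Definition hankel_preimage (c : config p n) : config p n :=
  fun i => \col_(k < n) preimage_coord c n k i.

Lemma coord_hankel_preimage c m : (m < n)%N -> coord (hankel_preimage c) m =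
  fun i => c i (inord (n' - m)) 0 +
    \sum_(j < n | (n' - m < j)%N) act r (alpha j) (coord (hankel_preimage c) (j + m - n)) i.
Proof.
have coord_pre m' : (m' < n)%N -> coord (hankel_preimage c) m' = preimage_coord c n m'.
  by move=> lt_m'; apply: functional_extensionality => i; rewrite /coord mxE inordK.
move=> lt_m; rewrite coord_pre // preimage_coord_stable //= ltnn.
apply: functional_extensionality => i; congr (_ + _); apply: eq_bigr => j lt_j.
have lt_jn := ltn_ord j.
rewrite coord_pre; last lia.
by rewrite (@preimage_coord_stable c m) ?(@preimage_coord_stable c n) //; lia.
Qed.

Lemma hankel_preimageK c : hankel (hankel_preimage c) = c.
Proof.
apply: functional_extensionality => i; apply/matrixP => k z; rewrite ord1.
have le_kn' : (k <= n')%N by rewrite -ltnS.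
have := coord_from_hankel (hankel_preimage c) i (leq_ltn_trans (leq_subr k n') (ltnSn n')).
rewrite {1}coord_hankel_preimage ?subKn ?inord_val ?(leq_ltn_trans (leq_subr k n')) //.
by move/addIr; rewrite /coord inord_val.
Qed.

End Companion.

Theorem lemma11 (p n : nat) (hp : prime p) (hn : (1 < n)%N)
  (alpha : 'I_n -> laurent p) :
  let A : 'M[laurent p]_n := (companion (fun i => lneg (alpha i)))^T in
  pos_expansive (lca A) <-> pos_expansive (lca A^T).
Proof.
case: n hn alpha => // n' _ alpha A.
have conj := hankel_conj alpha.
split.
- apply: (expansive_factor conj) (hankel_colocal alpha) => w.
  by exists (hankel_preimage alpha w); apply: hankel_preimageK.
- exact: expansive_embedding conj (colocal_inj (hankel_colocal alpha)) (hankel_local alpha).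
Qed.
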